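(* Let $i\colon\mathcal{A}\to\mathcal{A}'$ and $j\colon\mathcal{B}\to\mathcal{B}'$ be inclusions of cofinal full additive subcategories, and let $F\colon\mathcal{A}\to\mathcal{B}$ and $F'\colon\mathcal{A}'\to\mathcal{B}'$ be functors of additive categories with $j\circ F=F'\circ i$. Then: (1) the inclusion $i$ is faithfully flat; (2) $F$ is flat (respectively faithfully flat) if and only if $F'$ is flat (respectively faithfully flat).
   Context: A full additive subcategory $\mathcal{A}\subseteq\mathcal{A}'$ is cofinal if for every object $A'$ of $\mathcal{A}'$ there exist an object $A$ of $\mathcal{A}$ and morphisms $A'\to A\to A'$ composing to $\mathrm{id}_{A'}$. A sequence $A_0\xrightarrow{f}A_1\xrightarrow{g}A_2$ in an additive category is exact (at $A_1$) if $g\circ f=0$ and every morphism $h\colon A\to A_1$ with $g\circ h=0$ factors as $h=f\circ\bar h$. A functor $F$ of additive categories is flat if it maps exact sequences to exact sequences, and faithfully flat if a sequence is exact if and only if its image under $F$ is exact. *)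

From HB Require Import structures.
From mathcomp Require Import all_boot all_algebra.
Set Implicit Arguments. Unset Strict Implicit. Unset Printing Implicit Defensive.
Import GRing.Theory.
Local Open Scope ring_scope.

Record PreAdd := {
  Ob : Type;
  Hom : Ob -> Ob -> zmodType;
  comp : forall a b c : Ob, Hom b c -> Hom a b -> Hom a c;
  idm : forall a : Ob, Hom a a;
  comp_assoc : forall a b c d (h : Hom c d) (g : Hom b c) (f : Hom a b),
      comp h (comp g f) = comp (comp h g) f;
  comp_id_l : forall a b (f : Hom a b), comp (idm b) f = f;
  comp_id_r : forall a b (f : Hom a b), comp f (idm a) = f;
  comp_addl : forall a b c (g1 g2 : Hom b c) (f : Hom a b),
      comp (g1 + g2) f = comp g1 f + comp g2 f;
  comp_addr : forall a b c (g : Hom b c) (f1 f2 : Hom a b),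
      comp g (f1 + f2) = comp g f1 + comp g f2
}.

Arguments comp {C a b c} : rename.
Arguments idm {C} a : rename.
Arguments Hom : clear implicits.

Definition is_additive (C : PreAdd) : Prop :=
  (exists z : Ob C, idm z = 0) /\
  (forall a b : Ob C, exists (s : Ob C) (i1 : Hom C a s) (i2 : Hom C b s)
       (p1 : Hom C s a) (p2 : Hom C s b),
       [/\ comp p1 i1 = idm a, comp p2 i2 = idm b,
           comp p1 i2 = 0, comp p2 i1 = 0 &
           comp i1 p1 + comp i2 p2 = idm s]).

Definition subcat (C : PreAdd) (P : Ob C -> Prop) : PreAdd :=
  {| Ob := {x : Ob C | P x};
     Hom := fun a b => Hom C (proj1_sig a) (proj1_sig b);
     comp := fun a b c g f => comp g f;
     idm := fun a => idm (proj1_sig a);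
     comp_assoc := fun a b c d h g f => comp_assoc h g f;
     comp_id_l := fun a b f => comp_id_l f;
     comp_id_r := fun a b f => comp_id_r f;
     comp_addl := fun a b c g1 g2 f => comp_addl g1 g2 f;
     comp_addr := fun a b c g f1 f2 => comp_addr g f1 f2 |}.

Definition full_additive_subcat (C : PreAdd) (P : Ob C -> Prop) : Prop :=
  is_additive (subcat P).

Definition cofinal (C : PreAdd) (P : Ob C -> Prop) : Prop :=
  forall a' : Ob C, exists (a : Ob C) (r : Hom C a' a) (s : Hom C a a'),
    P a /\ comp s r = idm a'.

Record AddFunctor (C D : PreAdd) := {
  Fob : Ob C -> Ob D;
  Fhom : forall a b : Ob C, Hom C a b -> Hom D (Fob a) (Fob b);
  Fhom_id : forall a, Fhom (idm a) = idm (Fob a);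
  Fhom_comp : forall a b c (g : Hom C b c) (f : Hom C a b),
      Fhom (comp g f) = comp (Fhom g) (Fhom f);
  Fhom_add : forall a b (f g : Hom C a b), Fhom (f + g) = Fhom f + Fhom g
}.

Arguments Fhom {C D} F {a b} f : rename.

Definition incl (C : PreAdd) (P : Ob C -> Prop) : AddFunctor (subcat P) C :=
  {| Fob := fun a : Ob (subcat P) => proj1_sig a;
     Fhom := fun (a b : Ob (subcat P)) (f : Hom (subcat P) a b) => (f : Hom C _ _);
     Fhom_id := fun a => erefl;
     Fhom_comp := fun a b c g f => erefl;
     Fhom_add := fun a b f g => erefl |}.

Definition exact_at (C : PreAdd) (a0 a1 a2 : Ob C)
    (f : Hom C a0 a1) (g : Hom C a1 a2) : Prop :=
  comp g f = 0 /\
  forall (a : Ob C) (h : Hom C a a1), comp g h = 0 ->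
    exists hb : Hom C a a0, h = comp f hb.

Definition flat (C D : PreAdd) (F : AddFunctor C D) : Prop :=
  forall (a0 a1 a2 : Ob C) (f : Hom C a0 a1) (g : Hom C a1 a2),
    exact_at f g -> exact_at (Fhom F f) (Fhom F g).

Definition faithfully_flat (C D : PreAdd) (F : AddFunctor C D) : Prop :=
  forall (a0 a1 a2 : Ob C) (f : Hom C a0 a1) (g : Hom C a1 a2),
    exact_at f g <-> exact_at (Fhom F f) (Fhom F g).

Definition castHom (C : PreAdd) (x x' y y' : Ob C)
    (e1 : x = x') (e2 : y = y') (f : Hom C x y) : Hom C x' y' :=
  match e1 in _ = x0, e2 in _ = y0 return Hom C x0 y0 with
  | erefl, erefl => f end.

Definition square_commutes (C' D' : PreAdd) (P : Ob C' -> Prop)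
    (Q : Ob D' -> Prop) (F : AddFunctor (subcat P) (subcat Q))
    (F' : AddFunctor C' D') : Prop :=
  exists E : forall a : Ob (subcat P), proj1_sig (Fob F a) = Fob F' (proj1_sig a),
    forall (a b : Ob (subcat P)) (f : Hom (subcat P) a b),
      castHom (E a) (E b) (Fhom F f) = Fhom F' (f : Hom C' _ _).

(* Every object of A' is a retract of an object of A, which lets one trade a
   sequence a0 -> a1 -> a2 in A' for one in A with the same exactness:
   precomposing the first map with a split epimorphism or postcomposing the
   second with a split monomorphism does not affect exactness, and when a1 is
   a retract of b1 (s r = 1) one may pass to a0 (+) b1 -> b1 -> a2, the
   summand b1 mapping by the idempotent 1 - r s onto the kernel of s.
   Additive functors preserve every identity involved, so the images of the
   two sequences under any additive functor are simultaneously exact too, and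
   (faithful) flatness of a functor out of A' can be tested on A.  Exactness
   in a cofinal subcategory agrees with exactness in the ambient category
   because test morphisms can be precomposed with retractions. *)
From mathcomp Require Import all_boot ssralg.
From Stdlib Require Import Setoid.
Set Implicit Arguments. Unset Strict Implicit. Unset Printing Implicit Defensive.
Import GRing.Theory.
Local Open Scope ring_scope.

Section Preadditive.

Variable C : PreAdd.

Lemma comp0l a b c (f : Hom C a b) : comp (0 : Hom C b c) f = 0.
Proof. by apply: (@addrI _ (comp 0 f)); rewrite addr0 -comp_addl addr0. Qed.

Lemma comp0r a b c (g : Hom C b c) : comp g (0 : Hom C a b) = 0.
Proof. by apply: (@addrI _ (comp g 0)); rewrite addr0 -comp_addr addr0. Qed.

Lemma compBl a b c (g1 g2 : Hom C b c) (f : Hom C a b) :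
  comp (g1 - g2) f = comp g1 f - comp g2 f.
Proof. by apply: (@addIr _ (comp g2 f)); rewrite subrK -comp_addl subrK. Qed.

Lemma compBr a b c (g : Hom C b c) (f1 f2 : Hom C a b) :
  comp g (f1 - f2) = comp g f1 - comp g f2.
Proof. by apply: (@addIr _ (comp g f2)); rewrite subrK -comp_addr subrK. Qed.

Lemma exact_at_precomp_split_epi a0 b0 a1 a2
    (s : Hom C b0 a0) (r : Hom C a0 b0) (f : Hom C a0 a1) (g : Hom C a1 a2) :
  comp s r = idm a0 -> exact_at f g <-> exact_at (comp f s) g.
Proof.
move=> sr; split=> -[gf fac].
- split=> [|x h /fac [k ->]]; first by rewrite comp_assoc gf comp0l.
  by exists (comp r k); rewrite -comp_assoc (comp_assoc s) sr comp_id_l.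
- split=> [|x h /fac [k ->]]; last by exists (comp s k); rewrite comp_assoc.
  by rewrite -(comp_id_r f) -sr (comp_assoc f) comp_assoc gf comp0l.
Qed.

Lemma exact_at_postcomp_split_mono a0 a1 a2 b2
    (r : Hom C a2 b2) (s : Hom C b2 a2) (f : Hom C a0 a1) (g : Hom C a1 a2) :
  comp s r = idm a2 -> exact_at f g <-> exact_at f (comp r g).
Proof.
move=> sr; have rg_eq0 x (h : Hom C x a1) : comp (comp r g) h = 0 <-> comp g h = 0.
  split=> [rgh|gh]; last by rewrite -comp_assoc gh comp0r.
  by rewrite -(comp_id_l (comp g h)) -sr -comp_assoc (comp_assoc r) rgh comp0r.
by split=> -[gf fac]; split=> [|x h /rg_eq0]; by [apply/rg_eq0 | apply: fac].
Qed.

Lemma exact_at_retract_middle a0 a1 a2 b1 z (f : Hom C a0 a1) (g : Hom C a1 a2)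
    (r : Hom C a1 b1) (s : Hom C b1 a1)
    (i1 : Hom C a0 z) (i2 : Hom C b1 z) (p1 : Hom C z a0) (p2 : Hom C z b1) :
  comp s r = idm a1 ->
  comp p1 i1 = idm a0 -> comp p2 i2 = idm b1 -> comp p1 i2 = 0 -> comp p2 i1 = 0 ->
  exact_at f g <->
  exact_at (comp r (comp f p1) + comp (idm b1 - comp r s) p2) (comp g s).
Proof.
move=> sr pi11 pi22 pi12 pi21.
set m := _ + _.
have s_idem : comp s (idm b1 - comp r s) = 0.
  by rewrite compBr comp_id_r comp_assoc sr comp_id_l subrr.
have m_i1 : comp m i1 = comp r f.
  by rewrite comp_addl -!comp_assoc pi11 pi21 !comp0r comp_id_r addr0.
have m_i2 : comp m i2 = idm b1 - comp r s.
  by rewrite comp_addl -!comp_assoc pi12 pi22 !comp0r comp_id_r add0r.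
have sm : comp s m = comp f p1.
  by rewrite comp_addr (comp_assoc s (_ - _)) s_idem comp0l addr0 comp_assoc sr
    comp_id_l.
split=> -[gf fac].
- split=> [|x h gsh]; first by rewrite -comp_assoc sm comp_assoc gf comp0l.
  have [k sh] : exists k, comp s h = comp f k by apply: fac; rewrite comp_assoc.
  exists (comp i1 k + comp i2 h).
  rewrite comp_addr !comp_assoc m_i1 m_i2 compBl comp_id_l -!comp_assoc -sh.
  by rewrite addrC subrK.
- split=> [|x h gh].
    by rewrite -(comp_id_l f) -sr -comp_assoc comp_assoc -m_i1 comp_assoc gf
      comp0l.
  have [k rh] : exists k, comp r h = comp m k.
    by apply: fac; rewrite -comp_assoc (comp_assoc s) sr comp_id_l.
  exists (comp p1 k).
  by rewrite -(comp_id_l h) -sr -comp_assoc rh comp_assoc sm comp_assoc.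
Qed.

Lemma exact_at_subcat (P : Ob C -> Prop) (x0 x1 x2 : Ob (subcat P))
    (f : Hom (subcat P) x0 x1) (g : Hom (subcat P) x1 x2) :
  cofinal P -> exact_at f g <-> @exact_at C _ _ _ f g.
Proof.
move=> cP; split=> -[gf fac]; split=> // a h gh; last exact: fac.
have [b [r [s [Pb sr]]]] := cP a.
have [|k /= hs] := fac (exist _ b Pb) (comp h s).
  by rewrite /= comp_assoc gh comp0l.
by exists (@comp C _ _ _ k r); rewrite comp_assoc -hs -comp_assoc sr comp_id_r.
Qed.

End Preadditive.

Lemma exact_at_castHom (C : PreAdd) (x0 x0' x1 x1' x2 x2' : Ob C)
    (e0 : x0 = x0') (e1 : x1 = x1') (e2 : x2 = x2')
    (f : Hom C x0 x1) (g : Hom C x1 x2) :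
  exact_at (castHom e0 e1 f) (castHom e1 e2 g) <-> exact_at f g.
Proof. by case: _ / e0; case: _ / e1; case: _ / e2. Qed.

Section AdditiveFunctor.

Variables (C D : PreAdd) (G : AddFunctor C D).

Lemma Fhom0 a b : Fhom G (0 : Hom C a b) = 0.
Proof. by apply: (@addrI _ (Fhom G 0)); rewrite addr0 -Fhom_add addr0. Qed.

Lemma FhomB a b (f g : Hom C a b) : Fhom G (f - g) = Fhom G f - Fhom G g.
Proof. by apply: (@addIr _ (Fhom G g)); rewrite subrK -Fhom_add subrK. Qed.

Lemma Fhom_comp_idm a b (s : Hom C b a) (r : Hom C a b) :
  comp s r = idm a -> comp (Fhom G s) (Fhom G r) = idm (Fob G a).
Proof. by move=> sr; rewrite -Fhom_comp sr Fhom_id. Qed.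

Lemma Fhom_comp0 a b c (s : Hom C b c) (r : Hom C a b) :
  comp s r = 0 -> comp (Fhom G s) (Fhom G r) = 0.
Proof. by move=> sr; rewrite -Fhom_comp sr Fhom0. Qed.

End AdditiveFunctor.

Definition id_functor (C : PreAdd) : AddFunctor C C :=
  {| Fob := id;
     Fhom := fun a b (f : Hom C a b) => f;
     Fhom_id := fun a => erefl;
     Fhom_comp := fun a b c g f => erefl;
     Fhom_add := fun a b f g => erefl |}.

Lemma exact_at_cofinal_replacement (C : PreAdd) (P : Ob C -> Prop)
    (a0 a1 a2 : Ob C) (f : Hom C a0 a1) (g : Hom C a1 a2) :
  full_additive_subcat P -> cofinal P ->
  exists (x0 x1 x2 : Ob (subcat P))
         (f' : Hom (subcat P) x0 x1) (g' : Hom (subcat P) x1 x2),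
    forall (D : PreAdd) (G : AddFunctor C D),
      exact_at (Fhom G f) (Fhom G g) <->
      exact_at (Fhom G (f' : Hom C _ _)) (Fhom G (g' : Hom C _ _)).
Proof.
move=> [_ hbip] cP.
have [b0 [r0 [s0 [Pb0 sr0]]]] := cP a0.
have [b1 [r1 [s1 [Pb1 sr1]]]] := cP a1.
have [b2 [r2 [s2 [Pb2 sr2]]]] := cP a2.
have [z [i1 [i2 [p1 [p2 [pi11 pi22 pi12 pi21 _]]]]]] :=
  hbip (exist _ b0 Pb0) (exist _ b1 Pb1).
exists z, (exist _ b1 Pb1), (exist _ b2 Pb2),
  (comp r1 (comp (comp f s0) p1) + comp (idm b1 - comp r1 s1) p2),
  (comp (comp r2 g) s1).
move=> D G.
rewrite (exact_at_precomp_split_epi _ (Fhom G g) (Fhom_comp_idm G sr0)).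
rewrite (exact_at_postcomp_split_mono _ _ (Fhom_comp_idm G sr2)).
rewrite (exact_at_retract_middle _ _ (Fhom_comp_idm G sr1) (Fhom_comp_idm G pi11)
  (Fhom_comp_idm G pi22) (Fhom_comp0 G pi12) (Fhom_comp0 G pi21)).
by rewrite !(FhomB, Fhom_add, Fhom_comp, Fhom_id).
Qed.

Section CofinalTests.

Variables (C D : PreAdd) (P : Ob C -> Prop).
Hypotheses (hP : full_additive_subcat P) (cP : cofinal P).

Lemma flat_cofinalE (G : AddFunctor C D) :
  flat G <->
  forall (x0 x1 x2 : Ob (subcat P))
         (f : Hom (subcat P) x0 x1) (g : Hom (subcat P) x1 x2),
    exact_at f g -> exact_at (Fhom G (f : Hom C _ _)) (Fhom G (g : Hom C _ _)).
Proof.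
split=> [flG x0 x1 x2 f g /(exact_at_subcat _ _ cP) | flG a0 a1 a2 f g fg].
  exact: flG.
have [x0 [x1 [x2 [f' [g' repl]]]]] := exact_at_cofinal_replacement f g hP cP.
apply/repl/flG/(exact_at_subcat _ _ cP).
exact/(repl _ (id_functor C)).
Qed.

Lemma faithfully_flat_cofinalE (G : AddFunctor C D) :
  faithfully_flat G <->
  forall (x0 x1 x2 : Ob (subcat P))
         (f : Hom (subcat P) x0 x1) (g : Hom (subcat P) x1 x2),
    exact_at f g <-> exact_at (Fhom G (f : Hom C _ _)) (Fhom G (g : Hom C _ _)).
Proof.
split=> [ffG x0 x1 x2 f g | ffG a0 a1 a2 f g].
  by rewrite (exact_at_subcat _ _ cP); exact: ffG.
have [x0 [x1 [x2 [f' [g' repl]]]]] := exact_at_cofinal_replacement f g hP cP.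
by rewrite (repl _ (id_functor C)) repl -(exact_at_subcat _ _ cP); exact: ffG.
Qed.

End CofinalTests.

Lemma square_commutes_exact_at (A' B' : PreAdd) (P : Ob A' -> Prop)
    (Q : Ob B' -> Prop) (F : AddFunctor (subcat P) (subcat Q))
    (F' : AddFunctor A' B') (x0 x1 x2 : Ob (subcat P))
    (f : Hom (subcat P) x0 x1) (g : Hom (subcat P) x1 x2) :
  cofinal Q -> square_commutes F F' ->
  exact_at (Fhom F f) (Fhom F g) <->
  exact_at (Fhom F' (f : Hom A' _ _)) (Fhom F' (g : Hom A' _ _)).
Proof.
move=> cQ [E FE]; rewrite -(FE _ _ f) -(FE _ _ g) exact_at_castHom.
exact: exact_at_subcat.
Qed.

Theorem mainTheorem20 (A' B' : PreAdd) (P : Ob A' -> Prop) (Q : Ob B' -> Prop)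
  (hA' : is_additive A') (hB' : is_additive B')
  (hP : full_additive_subcat P) (hQ : full_additive_subcat Q)
  (cP : cofinal P) (cQ : cofinal Q)
  (F : AddFunctor (subcat P) (subcat Q)) (F' : AddFunctor A' B')
  (hcomm : square_commutes F F') :
  faithfully_flat (incl P) /\
  (flat F <-> flat F') /\
  (faithfully_flat F <-> faithfully_flat F').
Proof.
have FF' := square_commutes_exact_at _ _ cQ hcomm.
split; first by move=> x0 x1 x2 f g; exact: exact_at_subcat.
rewrite (flat_cofinalE hP cP F') (faithfully_flat_cofinalE hP cP F').
split; split=> flF x0 x1 x2 f g.
- by move=> /flF /FF'.
- by move=> /flF /FF'.
- by rewrite -FF'; exact: flF.
- by rewrite FF'; exact: flF.
Qed.
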